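(* Let $\mathit{VI}$ be a finite set of variables with $\#\mathit{VI}=n$ and $1\le k\le n$. For each $sh_1,sh_2\in\mathit{SH}$ and each $V\subseteq\mathit{VI}$: if $\rho_{\mathit{TSD}_k}(sh_1)=\rho_{\mathit{TSD}_k}(sh_2)$ then $\rho_{\mathit{TSD}_k}(\mathrm{proj}(sh_1,V))=\rho_{\mathit{TSD}_k}(\mathrm{proj}(sh_2,V))$.
   Context: $\mathit{SG}=\wp(\mathit{VI})\setminus\{\emptyset\}$, $\mathit{SH}=\wp(\mathit{SG})$. $\rho_{\mathit{TSD}_k}(sh)=\{\,S\in\mathit{SG}\mid \forall T\subseteq S:\ \#T<k\implies S=\bigcup\{U\in sh\mid T\subseteq U\subseteq S\}\,\}$. $\mathrm{proj}(sh,V)=\{S\cap V\mid S\in sh, S\cap V\ne\emptyset\}\cup\{\{x\}\mid x\in\mathit{VI}\setminus V\}$. *)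

From mathcomp Require Import all_boot.
Set Implicit Arguments. Unset Strict Implicit. Unset Printing Implicit Defensive.

(* VI is modelled by a finite type T.  SG = nonempty subsets of T,
   SH = sets of elements of SG. *)

Definition is_SH (T : finType) (sh : {set {set T}}) : Prop :=
  set0 \notin sh.

Definition rhoTSD (T : finType) (k : nat) (sh : {set {set T}}) : {set {set T}} :=
  [set S : {set T} | (S != set0) &&
     [forall X : {set T}, ((X \subset S) && (#|X| < k)) ==>
        (S == \bigcup_(U in sh | (X \subset U) && (U \subset S)) U)]].

Definition proj (T : finType) (sh : {set {set T}}) (V : {set T}) : {set {set T}} :=
  [set S :&: V | S in sh & S :&: V != set0] :|: [set [set x] | x in ~: V].

From mathcomp Require Import all_boot.
Set Implicit Arguments. Unset Strict Implicit. Unset Printing Implicit Defensive.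

(* Write [cover sh S] for the condition defining [S \in rhoTSD k sh]: every
   small [X \subset S] is covered, inside [S], by members of [sh] containing
   [X].  Covering is monotone in [sh] and transitive (if every member of [sh']
   is covered by [sh], then so is everything [sh'] covers).  Now
   [proj sh V \subset proj (rhoTSD k sh) V], and each member [U :&: V] of the
   right-hand side is covered by [proj sh V] (intersect with [V] the members
   of [sh] covering [U]).  Hence [proj sh V] and [proj (rhoTSD k sh) V] cover
   the same sets, i.e. [rhoTSD k (proj sh V)] depends on [sh] only through
   [rhoTSD k sh]. *)

Section Cover.

Variables (T : finType) (k : nat).
Implicit Types (sh : {set {set T}}) (S U V W X : {set T}).

Definition cover sh S :=
  forall X, X \subset S -> #|X| < k -> forall x, x \in S ->
  exists2 U, U \in sh & [&& X \subset U, U \subset S & x \in U].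

Lemma in_rhoTSD sh S : S \in rhoTSD k sh <-> S != set0 /\ cover sh S.
Proof.
rewrite inE; split.
  case/andP=> nzS /forallP coverS; split=> // X XS Xk x xS.
  have /implyP/(_ _)/eqP defS := coverS X; rewrite XS Xk in defS.
  move: xS; rewrite [in x \in S]defS //.
  by case/bigcupP=> U /andP[shU /andP[XU US]] xU; exists U; rewrite ?XU ?US.
case=> nzS coverS; rewrite nzS; apply/forallP=> X; apply/implyP=> /andP[XS Xk].
apply/eqP/setP=> x; apply/idP/bigcupP => [xS | [U /and3P[_ _ US] xU]].
  have [U shU /and3P[XU US xU]] := coverS X XS Xk x xS.
  by exists U; rewrite ?shU ?XU.
exact: subsetP US x xU.
Qed.

Lemma cover_mem sh S : S \in sh -> cover sh S.
Proof. by move=> shS X XS _ x xS; exists S; rewrite ?XS ?subxx. Qed.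

Lemma rhoTSD_mem sh S : S \in sh -> S != set0 -> S \in rhoTSD k sh.
Proof. by move=> shS nzS; apply/in_rhoTSD; split; last exact: cover_mem. Qed.

Lemma cover_subset sh sh' S : sh \subset sh' -> cover sh S -> cover sh' S.
Proof.
move=> sub_sh coverS X XS Xk x xS; have [U shU USx] := coverS X XS Xk x xS.
by exists U; first exact: subsetP sub_sh U shU.
Qed.

Lemma cover_trans sh sh' S :
  {in sh', forall W, cover sh W} -> cover sh' S -> cover sh S.
Proof.
move=> cover_sh' coverS X XS Xk x xS.
have [W sh'W /and3P[XW WS xW]] := coverS X XS Xk x xS.
have [U shU /and3P[XU UW xU]] := cover_sh' W sh'W X XW Xk x xW.
by exists U; rewrite ?XU ?xU ?(subset_trans UW WS).
Qed.

End Cover.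

Lemma in_proj (T : finType) (sh : {set {set T}}) V W :
  W \in proj sh V <->
  (exists2 U, U \in sh & W = U :&: V /\ U :&: V != set0) \/
  (exists2 y, y \notin V & W = [set y]).
Proof.
rewrite in_setU; split.
  case/orP=> /imsetP.
    by case=> U; rewrite inE => /andP[shU nzUV] ->; left; exists U.
  by case=> y; rewrite inE => yV ->; right; exists y.
case=> [[U shU [-> nzUV]] | [y yV ->]]; apply/orP.
  by left; apply/imsetP; exists U; rewrite ?inE ?shU.
by right; apply/imsetP; exists y; rewrite ?inE.
Qed.

Section ProjRhoTSD.

Variables (T : finType) (k : nat) (sh : {set {set T}}) (V : {set T}).

Lemma proj_subset_rhoTSD : proj sh V \subset proj (rhoTSD k sh) V.
Proof.
apply/subsetP=> W /in_proj [[U shU [-> nzUV]] | [y yV ->]]; apply/in_proj.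
  left; exists U => //; apply: rhoTSD_mem shU _.
  by apply: contraNneq nzUV => ->; rewrite set0I.
by right; exists y.
Qed.

Lemma cover_proj_rhoTSD :
  {in proj (rhoTSD k sh) V, forall W, cover k (proj sh V) W}.
Proof.
move=> W /in_proj [[U rhoU [-> _]] | [y yV ->]]; last first.
  by apply: cover_mem; apply/in_proj; right; exists y.
have [_ coverU] := (in_rhoTSD _ _ _).1 rhoU.
move=> X /subsetIP[XU XV] Xk x /setIP[xU xV].
have [U' shU' /and3P[XU' U'U xU']] := coverU X XU Xk x xU.
exists (U' :&: V); last by rewrite subsetI XU' XV setSI // inE xU' xV.
apply/in_proj; left; exists U' => //; split => //.
by apply/set0Pn; exists x; rewrite inE xU' xV.
Qed.

Lemma rhoTSD_proj : rhoTSD k (proj sh V) = rhoTSD k (proj (rhoTSD k sh) V).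
Proof.
apply/setP=> S; apply/idP/idP => /in_rhoTSD [nzS coverS]; apply/in_rhoTSD.
  by split=> //; apply: cover_subset proj_subset_rhoTSD coverS.
by split=> //; apply: cover_trans cover_proj_rhoTSD coverS.
Qed.

End ProjRhoTSD.

Theorem lemma3p22 (T : finType) (n k : nat) (sh1 sh2 : {set {set T}})
  (V : {set T}) :
  #|T| = n -> 1 <= k <= n ->
  is_SH sh1 -> is_SH sh2 ->
  rhoTSD k sh1 = rhoTSD k sh2 ->
  rhoTSD k (proj sh1 V) = rhoTSD k (proj sh2 V).
Proof.
by move=> _ _ _ _ rho12; rewrite rhoTSD_proj rho12 -rhoTSD_proj.
Qed.
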